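(* Let $\mathcal{X}$ be a finite set, $\pi$ a probability mass function on $\mathcal{X}$ with full support, and $P$ a $\pi$-stationary transition matrix on $\mathcal{X}$. Let a group $\mathcal{G}$ act on $\mathcal{X}$ with orbits $\mathcal{O}_1,\dots,\mathcal{O}_k$, and let $G$ be the associated Gibbs orbit kernel. For each $i\in\{1,\dots,k\}$, the restriction chain $(GPG)_i$ on $\mathcal{O}_i$ has eigenvalues $\lambda_1=1$ and $\lambda_2=1-\overline{a}_i$, where $a_i(x):=\sum_{y\in\mathcal{O}_i}P(x,y)$ and $\overline{a}_i:=\sum_{x\in\mathcal{O}_i}\frac{\pi(x)}{\pi(\mathcal{O}_i)}\sum_{y\in\mathcal{O}_i}P(x,y)$.
   Context: The Gibbs orbit kernel is $G(x,y)=\pi(y)/\pi(\mathcal{O}(x))$ if $y\in\mathcal{O}(x)$ (the orbit of $x$), and $0$ otherwise, where $\pi(A)=\sum_{z\in A}\pi(z)$. For a transition matrix $K$ on $\mathcal{X}$, the restriction chain $K_i$ on $\mathcal{O}_i$ is the matrix on $\mathcal{O}_i\times\mathcal{O}_i$ with $K_i(x,y)=K(x,y)$ for $x\ne y$ and $K_i(x,x)=1-\sum_{z\in\mathcal{O}_i\setminus\{x\}}K(x,z)$. *)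

From HB Require Import structures.
From mathcomp Require Import all_boot all_order all_algebra all_fingroup.
Set Implicit Arguments. Unset Strict Implicit. Unset Printing Implicit Defensive.
Import Order.TTheory GRing.Theory Num.Theory.
Local Open Scope ring_scope.

Definition massR {R : realFieldType} {X : finType} (pi : X -> R) (A : {set X}) : R :=
  \sum_(z in A) pi z.

Definition kmul {R : realFieldType} {X : finType} (K L : X -> X -> R) : X -> X -> R :=
  fun x y => \sum_z K x z * L z y.

Definition orb {gT : finGroupType} {X : finType} (to : {action gT &-> X}) (x : X) : {set X} :=
  orbit to [set: gT] x.

Definition gibbs_orbit_kernel {R : realFieldType} {gT : finGroupType} {X : finType}
  (to : {action gT &-> X}) (pi : X -> R) : X -> X -> R :=
  fun x y => if y \in orb to x then pi y / massR pi (orb to x) else 0.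

Definition restriction_chain {R : realFieldType} {X : finType} (K : X -> X -> R)
  (O : {set X}) : 'M[R]_#|O| :=
  \matrix_(i < #|O|, j < #|O|)
    let x := enum_val i in let y := enum_val j in
    if i == j then 1 - \sum_(z in O | z != x) K x z else K x y.

Definition abar {R : realFieldType} {X : finType} (pi : X -> R) (P : X -> X -> R)
  (O : {set X}) : R :=
  \sum_(x in O) pi x / massR pi O * \sum_(y in O) P x y.

From HB Require Import structures.
From mathcomp Require Import all_boot all_order all_algebra all_fingroup.
From mathcomp Require Import ring.
Import Order.TTheory GRing.Theory Num.Theory.
Set Implicit Arguments. Unset Strict Implicit.
Local Open Scope ring_scope.

(* On an orbit O the Gibbs kernel forgets its starting point and redraws from
   pi conditioned on O, so (G K G)(x, y) = abar(K) * pi(y) / pi(O) for x, y in O.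
   The restriction chain is therefore (1 - abar) I + abar * 1 q^T with q the
   conditional law pi(. | O), a rank-one perturbation of a scalar matrix: since
   q sums to 1, q is a left eigenvector for 1, every vector of zero sum (there
   are nonzero ones iff #|O| > 1) is one for 1 - abar, and summing the
   coordinates of an eigenvector rules out any other eigenvalue. *)

Lemma row_sum_eq0_le1 (R : nmodType) n (v : 'rV[R]_n) :
  (n <= 1)%N -> \sum_j v 0 j = 0 -> v = 0.
Proof.
rewrite -[n in (n <= 1)%N]card_ord => /card_le1_eqP n_le1 sum_v.
apply/rowP => j; rewrite mxE -sum_v (bigD1 j) //= big_pred0 ?addr0 // => i.
by rewrite (n_le1 i j) ?eqxx.
Qed.

Lemma sum_indicator (R : pzSemiRingType) n (i : 'I_n) :
  \sum_(j < n) ((j == i)%:R : R) = 1.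
Proof. by rewrite (bigD1 i) //= big1 => [|j /negbTE ->]; rewrite ?eqxx ?addr0. Qed.

Section ScalarPlusRankOne.

Variables (F : fieldType) (n : nat) (q : 'rV[F]_n) (c a : F).
Hypothesis sum_q : \sum_j q 0 j = 1.

Let M := c%:M + a *: (const_mx 1 *m q).

Lemma mulmx_scalar_rank_one (v : 'rV_n) :
  v *m M = c *: v + (a * \sum_j v 0 j) *: q.
Proof.
rewrite mulmxDr mul_mx_scalar -scalemxAr mulmxA [v *m _]mx11_scalar mul_scalar_mx.
by rewrite scalerA !mxE; under eq_bigr do rewrite mxE mulr1.
Qed.

Lemma sum_mulmx_scalar_rank_one (v : 'rV_n) :
  \sum_j (v *m M) 0 j = (c + a) * \sum_j v 0 j.
Proof.
rewrite mulmx_scalar_rank_one.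
under eq_bigr do rewrite !mxE.
by rewrite big_split /= -!mulr_sumr sum_q mulr1 mulrDl.
Qed.

Lemma eigenvalue_scalar_rank_one lambda :
  eigenvalue M lambda <-> lambda = c + a \/ (1 < n)%N /\ lambda = c.
Proof.
split.
- case/eigenvalueP => v vM v_neq0.
  have [sum_v0|sum_v_neq0] := eqVneq (\sum_j v 0 j) 0.
    have : (lambda - c) *: v = 0.
      by rewrite scalerBl -vM mulmx_scalar_rank_one sum_v0 mulr0 scale0r addr0 subrr.
    move/eqP; rewrite scaler_eq0 (negbTE v_neq0) orbF subr_eq0 => /eqP lambda_c.
    right; split=> //; rewrite ltnNge; apply: contra v_neq0 => n_le1.
    by apply/eqP; apply: row_sum_eq0_le1.
  left; apply/esym/(mulIf sum_v_neq0).
  rewrite -sum_mulmx_scalar_rank_one vM mulr_sumr.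
  by apply: eq_bigr => j _; rewrite mxE.
- case=> [->|[n_gt1 ->]]; apply/eigenvalueP.
    exists q; first by rewrite mulmx_scalar_rank_one sum_q mulr1 scalerDl.
    apply: contra_eq_neq sum_q => ->.
    by rewrite big1 => [|j _]; rewrite ?mxE // eq_sym oner_eq0.
  pose i0 : 'I_n := Ordinal (ltnW n_gt1); pose i1 : 'I_n := Ordinal n_gt1.
  exists (\row_j ((j == i0)%:R - (j == i1)%:R)).
    have sum_v0 : \sum_j (\row_j ((j == i0)%:R - (j == i1)%:R) : 'rV[F]_n) 0 j = 0.
      under eq_bigr do rewrite mxE.
      by rewrite sumrB !sum_indicator subrr.
    by rewrite mulmx_scalar_rank_one sum_v0 mulr0 scale0r addr0.
  apply/eqP => /rowP/(_ i0)/eqP; rewrite !mxE eqxx.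
  by rewrite (_ : i0 == i1 = false) // subr0 oner_eq0.
Qed.

End ScalarPlusRankOne.

Section GibbsOrbitKernel.

Variables (R : realFieldType) (gT : finGroupType) (X : finType).
Variables (to : {action gT &-> X}) (pi : X -> R).

Local Notation G := (gibbs_orbit_kernel to pi).

Lemma orb_sym x y : (y \in orb to x) = (x \in orb to y).
Proof. exact: orbit_sym. Qed.

Lemma orb_eq x y : y \in orb to x -> orb to y = orb to x.
Proof. by move/orbit_eqP. Qed.

Lemma kmul_gibbs_l (K : X -> X -> R) x w :
  kmul G K x w = \sum_(z in orb to x) pi z / massR pi (orb to x) * K z w.
Proof.
rewrite /kmul [RHS]big_mkcond; apply: eq_bigr => z _.
by rewrite /gibbs_orbit_kernel; case: ifP; rewrite ?mul0r.
Qed.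

Lemma kmul_gibbs_r (K : X -> X -> R) w y :
  kmul K G w y = (\sum_(z in orb to y) K w z) * (pi y / massR pi (orb to y)).
Proof.
rewrite /kmul big_distrl [RHS]big_mkcond; apply: eq_bigr => z _.
rewrite /gibbs_orbit_kernel orb_sym; case: ifP => [/orb_eq -> //|_].
by rewrite mulr0.
Qed.

Lemma kmul_gibbs_sandwich (K : X -> X -> R) x0 x y :
  x \in orb to x0 -> y \in orb to x0 ->
  kmul (kmul G K) G x y = abar pi K (orb to x0) * (pi y / massR pi (orb to x0)).
Proof.
move=> /orb_eq orb_x /orb_eq orb_y; rewrite kmul_gibbs_r orb_y; congr (_ * _).
under eq_bigr do rewrite kmul_gibbs_l orb_x.
by rewrite exchange_big; apply: eq_bigr => z _; rewrite mulr_sumr.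
Qed.

End GibbsOrbitKernel.

Lemma restriction_chain_rank_one (R : realFieldType) (X : finType)
    (K : X -> X -> R) (O : {set X}) (b : R) (r : X -> R) :
  {in O &, forall x y, K x y = b * r y} ->
  restriction_chain K O =
    (1 - b * massR r O)%:M + b *: (const_mx 1 *m \row_j r (enum_val j)).
Proof.
move=> K_rank_one; apply/matrixP => i j; rewrite !mxE big_ord1 !mxE mul1r.
have [<-|ij] := eqVneq i j; rewrite /= ?mulr1n ?mulr0n ?add0r.
  under eq_bigr => z /andP[zO _] do rewrite K_rank_one ?enum_valP //.
  rewrite -mulr_sumr /massR [in RHS](bigD1 (enum_val i)) ?enum_valP //=; ring.
by rewrite K_rank_one ?enum_valP.
Qed.

Theorem proposition2p6 (R : realFieldType) (X : finType) (gT : finGroupType)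
  (to : {action gT &-> X}) (pi : X -> R) (P : X -> X -> R)
  (pi_pos : forall x, 0 < pi x)
  (pi_sum : \sum_x pi x = 1)
  (P_nonneg : forall x y, 0 <= P x y)
  (P_row : forall x, \sum_y P x y = 1)
  (P_stat : forall y, \sum_x pi x * P x y = pi y)
  (x0 : X) :
  let O := orb to x0 in
  let G := gibbs_orbit_kernel to pi in
  forall lambda : R,
    eigenvalue (restriction_chain (kmul (kmul G P) G) O) lambda <->
    (lambda = 1 \/ ((1 < #|O|)%N /\ lambda = 1 - abar pi P O)).
Proof.
move=> O G lambda.
have mass_gt0 : 0 < massR pi O.
  rewrite /massR (bigD1 x0) ?orbit_refl //= ltr_pwDl ?sumr_ge0 // => z _.
  exact: ltW.
pose r y := pi y / massR pi O.
have mass_r : massR r O = 1 by rewrite /massR -mulr_suml mulfV ?gt_eqF.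
have sum_r : \sum_j (\row_j r (enum_val j) : 'rV_#|O|) 0 j = 1.
  under eq_bigr do rewrite mxE.
  by rewrite -big_enum_val.
rewrite (@restriction_chain_rank_one _ _ _ _ (abar pi P O) r); last first.
  by move=> x y; apply: kmul_gibbs_sandwich.
by rewrite mass_r mulr1 eigenvalue_scalar_rank_one // subrK.
Qed.
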